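(* Let $\mathcal{E}=[\theta,u]$ be an interval effect algebra with an order-determining set of states $\mathcal{S}(\mathcal{E})$. For $a,b\in\mathcal{E}$ and $\beta\in\mathcal{S}(\mathcal{E})$ define $a[\beta]b=\beta(b)a\in\mathcal{E}$. Then for all $a,b,c\in\mathcal{E}$ and $\alpha,\beta\in\mathcal{S}(\mathcal{E})$: (i) the maps $b\mapsto a[\beta]b$ and $a\mapsto a[\beta]b$ preserve convex combinations and are additive (e.g. $a[\beta](b+c)=a[\beta]b+a[\beta]c$ whenever $b+c\le u$, and $(a+c)[\beta]b=a[\beta]b+c[\beta]b$ whenever $a+c\le u$); (ii) $\theta[\beta]b=b[\beta]\theta=\theta$; (iii) $a[\beta]u=a$, $u[\beta]b=\beta(b)u$, and $u[\beta]b=b$ if and only if $b=\lambda u$ for some $\lambda\in[0,1]$; (iv) $a[\beta]b\le a$; (v) $a[\alpha](b[\beta]c)=(a[\alpha]b)[\beta]c$; (vi) $a[\alpha]b=\theta$ does not in general imply $b[\alpha]a=\theta$: there exist such an $\mathcal{E}$, a state $\alpha$, and $a,b\in\mathcal{E}$ with $a[\alpha]b=\theta$ but $b[\alpha]a\ne\theta$.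
   Context: Let $V$ be a real vector space with zero $\theta$ and $K\subseteq V$ a positive cone ($\mathbb{R}^+K\subseteq K$, $K+K\subseteq K$, $K\cap(-K)=\{\theta\}$), ordered by $x\le y$ iff $y-x\in K$. For $u\in K$, $u\ne\theta$, the interval effect algebra is $\mathcal{E}=[\theta,u]=\{x\in K:x\le u\}$; $a\perp b$ means $a+b\le u$. A state is $s\colon\mathcal{E}\to[0,1]$ with $s(u)=1$ and $s(a+b)=s(a)+s(b)$ when $a\perp b$; $\mathcal{S}(\mathcal{E})$ is the set of all states, assumed order-determining ($a\le b$ iff $s(a)\le s(b)$ for all states $s$). *)

From HB Require Import structures.
From mathcomp Require Import all_boot all_order all_algebra.
From mathcomp Require Import reals.
Set Implicit Arguments. Unset Strict Implicit. Unset Printing Implicit Defensive.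
Import Order.TTheory GRing.Theory Num.Theory.
Local Open Scope ring_scope.

Section IEA.
Variables (R : realType) (V : lmodType R).

Definition positive_cone (K : V -> Prop) : Prop :=
  [/\ (forall (r : R) x, 0 <= r -> K x -> K (r *: x)),
      (forall x y, K x -> K y -> K (x + y)),
      K 0 &
      (forall x, K x -> K (- x) -> x = 0)].

Definition cle (K : V -> Prop) (x y : V) : Prop := K (y - x).

Definition in_eff (K : V -> Prop) (u x : V) : Prop := K x /\ cle K x u.

(* states on [θ,u]; represented by functions V -> R, only their values on
   [θ,u] matter *)
Definition is_state (K : V -> Prop) (u : V) (s : V -> R) : Prop :=
  [/\ (forall x, in_eff K u x -> 0 <= s x <= 1),
      s u = 1 &
      (forall a b, in_eff K u a -> in_eff K u b -> cle K (a + b) u ->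
         s (a + b) = s a + s b)].

Definition order_determining (K : V -> Prop) (u : V) : Prop :=
  forall a b, in_eff K u a -> in_eff K u b ->
    (cle K a b <-> forall s, is_state K u s -> s a <= s b).

Definition interval_effect_algebra (K : V -> Prop) (u : V) : Prop :=
  [/\ positive_cone K, K u, u <> 0 & order_determining K u].

Definition sprod (a : V) (beta : V -> R) (b : V) : V := beta b *: a.

End IEA.

(* States are homogeneous: for x in [θ, u] the map t |-> β (t x) is additive and
   nonnegative on [0, 1], and such a map is linear (squeeze k/n <= t between
   consecutive fractions), so β (t x) = t β (x).  Then a[β]b = β(b) a is linear
   in a and, on [θ, u], additive and homogeneous in b, which gives (i)-(v).
   For (vi) take the positive orthant of R^2 with u = (1, 1) and α the first
   coordinate: (1, 0)[α](0, 1) = 0 while (0, 1)[α](1, 0) = (0, 1). *)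

From HB Require Import structures.
From mathcomp Require Import all_boot all_order all_algebra.
From mathcomp Require Import reals.
From mathcomp Require Import ring lra.
Import Order.TTheory GRing.Theory Num.Theory.
Local Open Scope ring_scope.
Set Implicit Arguments. Unset Strict Implicit.

Lemma le0_bounded_natmul (R : archiRealFieldType) (x c : R) :
  (forall n, x *+ n <= c) -> x <= 0.
Proof.
move=> bounded; rewrite leNgt; apply/negP => x_gt0.
have := bounded (Num.truncn (c / x)).+1.
rewrite -mulr_natr -ler_pdivlMl // mulrC; apply/negP; rewrite -ltNge.
exact: truncnS_gt.
Qed.

Section AdditiveOnUnitInterval.
Variables (R : archiRealFieldType) (f : R -> R).
Hypothesis fD :
  forall a b : R, 0 <= a -> 0 <= b -> a + b <= 1 -> f (a + b) = f a + f b.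
Hypothesis f_ge0 : forall a : R, 0 <= a <= 1 -> 0 <= f a.

Lemma additive_f0 : f 0 = 0.
Proof. have := fD (lexx 0) (lexx 0); rewrite addr0 => /(_ ler01); lra. Qed.

Lemma additive_le a b : 0 <= a -> a <= b -> b <= 1 -> f a <= f b.
Proof.
move=> a_ge0 le_ab b_le1.
have -> : b = a + (b - a) by ring.
rewrite fD ?subr_ge0 ?subrKC // lerDl f_ge0 // subr_ge0 le_ab /=; lra.
Qed.

Lemma additive_natmul x n : 0 <= x -> x *+ n <= 1 -> f (x *+ n) = f x *+ n.
Proof.
move=> x_ge0; elim: n => [|n IHn] le1; first by rewrite !mulr0n additive_f0.
have le_n_Sn : x *+ n <= x *+ n.+1 by rewrite mulrS lerDr.
by rewrite mulrS fD ?mulrn_wge0 ?IHn -?mulrS ?(le_trans le_n_Sn).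
Qed.

Lemma additive_ratio k n : (k <= n)%N -> f (k%:R / n%:R) = k%:R / n%:R * f 1.
Proof.
case: n => [|n] le_kn.
  by move: le_kn; rewrite leqn0 => /eqP->; rewrite !mul0r additive_f0.
set N : R := n.+1%:R; have N_gt0 : 0 < N by rewrite ltr0n.
have inv_ge0 : 0 <= N^-1 by rewrite invr_ge0 ltW.
have f1 : f 1 = f N^-1 * N.
  have N_invK : N^-1 *+ n.+1 = 1 by rewrite -mulr_natr mulVf ?gt_eqF.
  by rewrite -{1}N_invK additive_natmul ?N_invK // mulr_natr.
rewrite f1 mulrCA divfK ?gt_eqF // mulr_natl mulr_natr additive_natmul //.
by rewrite -mulr_natl ler_pdivrMr // mul1r ler_nat.
Qed.

(* With k = floor (l n): f l >= f (k / n) = k / n * f 1 >= l * f 1 - f 1 / n. *)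
Lemma additive_lower_bound (l : R) :
  0 <= l <= 1 -> forall n, (l * f 1 - f l) *+ n <= f 1.
Proof.
have f1_ge0 : 0 <= f 1 by rewrite f_ge0 ?lexx ?ler01.
move=> /andP[l_ge0 l_le1] [|n]; first by rewrite mulr0n.
set N : R := n.+1%:R; have N_gt0 : 0 < N by rewrite ltr0n.
have /andP[k_le k_gt] := truncn_itv (mulr_ge0 l_ge0 (ltW N_gt0)).
set k := Num.truncn (l * N) in k_le k_gt.
have q_le_l : k%:R / N <= l by rewrite ler_pdivrMr.
have q_ge0 : 0 <= k%:R / N by rewrite divr_ge0 ?ler0n ?ltW.
have le_kn : (k <= n.+1)%N.
  by rewrite -(ler_nat R) (le_trans k_le) // ler_piMl // ltW.
have := additive_le q_ge0 q_le_l l_le1; rewrite additive_ratio // => f_ge.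
have kE : k%:R = k%:R / N * N by rewrite divfK ?gt_eqF.
rewrite -mulr_natr -/N; move: k_gt; rewrite -natr1 kE.
move: (k%:R / N) f_ge q_ge0 q_le_l => q *; nra.
Qed.

Lemma additive_linear (l : R) : 0 <= l <= 1 -> f l = l * f 1.
Proof.
move=> l_itv; have /andP[l_ge0 l_le1] := l_itv.
have l'_itv : 0 <= 1 - l <= 1 by apply/andP; split; lra.
have le_l := le0_bounded_natmul (additive_lower_bound l_itv).
have le_l' := le0_bounded_natmul (additive_lower_bound l'_itv).
(* The lower bound at 1 - l is an upper bound at l, since f 1 = f l + f (1 - l). *)
have := fD l_ge0 (proj1 (andP l'_itv)); rewrite subrKC => /(_ (lexx 1)).
lra.
Qed.
End AdditiveOnUnitInterval.

Section SequentialProductLinearity.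
Variables (R : realType) (V : lmodType R) (beta : V -> R).

Lemma sprodDl a c b : sprod (a + c) beta b = sprod a beta b + sprod c beta b.
Proof. exact: scalerDr. Qed.

Lemma sprodZl l a b : sprod (l *: a) beta b = l *: sprod a beta b.
Proof. by rewrite /sprod !scalerA mulrC. Qed.

Lemma sprod0l b : sprod 0 beta b = 0.
Proof. exact: scaler0. Qed.

End SequentialProductLinearity.

Section IntervalEffectAlgebra.
Variables (R : realType) (V : lmodType R) (K : V -> Prop) (u : V).
Hypotheses (cone_K : positive_cone K) (K_u : K u).

Lemma coneZ r x : 0 <= r -> K x -> K (r *: x).
Proof. by case: cone_K => + _ _ _; apply. Qed.

Lemma coneD x y : K x -> K y -> K (x + y).
Proof. by case: cone_K => _ + _ _; apply. Qed.

Lemma in_eff0 : in_eff K u 0.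
Proof. by case: cone_K; split; rewrite // /cle subr0. Qed.

Lemma in_eff_unit : in_eff K u u.
Proof. by case: cone_K; split; rewrite // /cle subrr. Qed.

Lemma cle_unit_conv l b c : 0 <= l <= 1 -> in_eff K u b -> in_eff K u c ->
  cle K (l *: b + (1 - l) *: c) u.
Proof.
move=> /andP[l_ge0 l_le1] [_ b_le] [_ c_le].
rewrite /cle.
have -> : u - (l *: b + (1 - l) *: c) = l *: (u - b) + (1 - l) *: (u - c).
  by rewrite !scalerBr addrACA -scalerDl subrKC scale1r opprD.
by apply: coneD; apply: coneZ; rewrite ?subr_ge0.
Qed.

Lemma in_effZ l x : 0 <= l <= 1 -> in_eff K u x -> in_eff K u (l *: x).
Proof.
move=> l_itv Ex; split; first by case: Ex => Kx _; apply: coneZ Kx; case/andP: l_itv.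
by have := cle_unit_conv l_itv Ex in_eff0; rewrite scaler0 addr0.
Qed.

Section State.
Variable s : V -> R.
Hypothesis s_state : is_state K u s.

Lemma state_itv x : in_eff K u x -> 0 <= s x <= 1.
Proof. by case: s_state => + _ _; apply. Qed.

Lemma stateD a b : in_eff K u a -> in_eff K u b -> cle K (a + b) u ->
  s (a + b) = s a + s b.
Proof. by case: s_state => _ _; apply. Qed.

Lemma state_unit : s u = 1.
Proof. by case: s_state. Qed.

Lemma stateZ l x : 0 <= l <= 1 -> in_eff K u x -> s (l *: x) = l * s x.
Proof.
move=> l_itv Ex.
have Etx t : 0 <= t <= 1 -> in_eff K u (t *: x) by move/in_effZ; apply.
rewrite -[in RHS](scale1r x).
apply: (additive_linear (f := fun t => s (t *: x))) l_itv.
- move=> a b a_ge0 b_ge0 ab_le1.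
  have [a_le1 b_le1] : a <= 1 /\ b <= 1 by split; lra.
  have /Etx[_ ab_le] : 0 <= a + b <= 1 by rewrite addr_ge0.
  by rewrite scalerDl in ab_le *; apply: stateD ab_le; apply: Etx; apply/andP.
- by move=> a /Etx /state_itv /andP[].
Qed.

Lemma state0 : s 0 = 0.
Proof. by rewrite -(scale0r u) stateZ ?mul0r ?lexx ?ler01 //; apply: in_eff_unit. Qed.

Lemma state_le a b : in_eff K u a -> in_eff K u b -> cle K a b -> s a <= s b.
Proof.
move=> [Ka a_le] [Kb b_le] ab_le.
have Eba : in_eff K u (b - a).
  by split; rewrite // /cle opprB addrA addrAC; apply: coneD.
have := stateD (conj Ka a_le) Eba; rewrite subrKC => /(_ b_le) ->.
by rewrite lerDl; case/andP: (state_itv Eba).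
Qed.

End State.

Section SequentialProduct.
Variables (alpha beta : V -> R).
Hypotheses (alpha_state : is_state K u alpha) (beta_state : is_state K u beta).

Lemma sprod_in_eff a b : in_eff K u a -> in_eff K u b -> in_eff K u (sprod a beta b).
Proof. by move=> Ea /(state_itv beta_state) /in_effZ; apply. Qed.

Lemma sprod0r a : sprod a beta 0 = 0.
Proof. by rewrite /sprod state0 ?scale0r. Qed.

Lemma sprod_unitr a : sprod a beta u = a.
Proof. by rewrite /sprod state_unit ?scale1r. Qed.

Lemma sprodDr a b c : in_eff K u b -> in_eff K u c -> cle K (b + c) u ->
  sprod a beta (b + c) = sprod a beta b + sprod a beta c.
Proof. by move=> Eb Ec bc_le; rewrite /sprod stateD ?scalerDl. Qed.

Lemma sprodZr a l b : 0 <= l <= 1 -> in_eff K u b ->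
  sprod a beta (l *: b) = l *: sprod a beta b.
Proof. by move=> l_itv Eb; rewrite /sprod stateZ ?scalerA. Qed.

Lemma sprod_convr a b c l : 0 <= l <= 1 -> in_eff K u b -> in_eff K u c ->
  sprod a beta (l *: b + (1 - l) *: c)
    = l *: sprod a beta b + (1 - l) *: sprod a beta c.
Proof.
move=> l_itv Eb Ec; have l'_itv : 0 <= 1 - l <= 1.
  by case/andP: l_itv => ? ?; apply/andP; split; lra.
rewrite sprodDr ?sprodZr //; [exact: in_effZ | exact: in_effZ | exact: cle_unit_conv].
Qed.

Lemma sprod_unitl_fixed b : in_eff K u b ->
  sprod u beta b = b <-> exists l : R, 0 <= l <= 1 /\ b = l *: u.
Proof.
move=> Eb; split=> [<- | [l [l_itv ->]]]; first by exists (beta b); rewrite state_itv.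
by rewrite /sprod stateZ ?state_unit ?mulr1 //; apply: in_eff_unit.
Qed.

Lemma sprod_cle a b : in_eff K u a -> in_eff K u b -> cle K (sprod a beta b) a.
Proof.
move=> [Ka _] /(state_itv beta_state) /andP[_ le1].
by rewrite /cle /sprod -{1}(scale1r a) -scalerBl; apply: coneZ; rewrite ?subr_ge0.
Qed.

Lemma sprodA a b c : in_eff K u b -> in_eff K u c ->
  sprod a alpha (sprod b beta c) = sprod (sprod a alpha b) beta c.
Proof. by move=> Eb Ec; rewrite /sprod stateZ ?state_itv ?scalerA 1?mulrC. Qed.

End SequentialProduct.
End IntervalEffectAlgebra.

Section Orthant.
Variable R : realType.
Local Notation plane := (R^o * R^o)%type.

Definition orthant (x : plane) : Prop := 0 <= x.1 /\ 0 <= x.2.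

Lemma orthant_cone : positive_cone orthant.
Proof.
split=> [r x r_ge0 [? ?] | x y [? ?] [? ?] | | [x1 x2] [/= ? ?] [/= Nx1_ge0 Nx2_ge0]].
- by split; apply: mulr_ge0.
- by split; apply: addr_ge0.
- by split.
- by congr pair; apply/eqP; rewrite eq_le -oppr_ge0 ?Nx1_ge0 ?Nx2_ge0.
Qed.

Lemma in_eff_orthant (x : plane) :
  in_eff orthant (1, 1) x <-> 0 <= x.1 <= 1 /\ 0 <= x.2 <= 1.
Proof.
rewrite /in_eff /cle /orthant /= !subr_ge0.
by split=> [[[-> ->] [-> ->]] | [/andP[-> ->] /andP[-> ->]]].
Qed.

Lemma state_fst : is_state orthant (1, 1) (@fst R^o R^o).
Proof. by split=> // x /in_eff_orthant[]. Qed.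

Lemma state_snd : is_state orthant (1, 1) (@snd R^o R^o).
Proof. by split=> // x /in_eff_orthant[]. Qed.

Lemma orthant_interval_effect_algebra : interval_effect_algebra orthant (1, 1).
Proof.
split=> [| | [] /eqP | a b Ea Eb].
- exact: orthant_cone.
- by split; rewrite /= (@ler01 R).
- by rewrite oner_eq0.
split=> [ab_le s s_state | le_states]; first exact: (state_le orthant_cone s_state).
by split; rewrite /= subr_ge0; [apply: le_states state_fst | apply: le_states state_snd].
Qed.

End Orthant.

Theorem lemma4p2 (R : realType) :
  (forall (V : lmodType R) (K : V -> Prop) (u : V),
   interval_effect_algebra K u ->
   forall (a b c : V) (alpha beta : V -> R),
   in_eff K u a -> in_eff K u b -> in_eff K u c ->
   is_state K u alpha -> is_state K u beta ->
   (* a[β]b ∈ E *)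
   in_eff K u (sprod a beta b) /\
   (* (i) convexity and additivity in each argument *)
   (forall l : R, 0 <= l <= 1 ->
      sprod a beta (l *: b + (1 - l) *: c)
        = l *: sprod a beta b + (1 - l) *: sprod a beta c) /\
   (forall l : R, 0 <= l <= 1 ->
      sprod (l *: a + (1 - l) *: c) beta b
        = l *: sprod a beta b + (1 - l) *: sprod c beta b) /\
   (cle K (b + c) u -> sprod a beta (b + c) = sprod a beta b + sprod a beta c) /\
   (cle K (a + c) u -> sprod (a + c) beta b = sprod a beta b + sprod c beta b) /\
   (* (ii) *)
   (sprod 0 beta b = 0 /\ sprod b beta 0 = 0) /\
   (* (iii) *)
   (sprod a beta u = a /\ sprod u beta b = beta b *: u /\
    (sprod u beta b = b <-> exists l : R, 0 <= l <= 1 /\ b = l *: u)) /\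
   (* (iv) *)
   cle K (sprod a beta b) a /\
   (* (v) *)
   sprod a alpha (sprod b beta c) = sprod (sprod a alpha b) beta c)
  /\
  (* (vi) a[α]b = θ does not in general imply b[α]a = θ *)
  (exists (V : lmodType R) (K : V -> Prop) (u : V) (alpha : V -> R) (a b : V),
     interval_effect_algebra K u /\ is_state K u alpha /\
     in_eff K u a /\ in_eff K u b /\
     sprod a alpha b = 0 /\ sprod b alpha a <> 0).
Proof.
split=> [V K u [cone_K K_u _ _] a b c alpha beta Ea Eb Ec S_alpha S_beta | ].
  split; first exact: sprod_in_eff.
  split; first by move=> l l_itv; apply: (sprod_convr cone_K K_u S_beta).
  split; first by move=> l _; rewrite sprodDl !sprodZl.
  split; first exact: sprodDr.
  split; first by rewrite sprodDl.
  split; first by rewrite sprod0l (sprod0r cone_K K_u S_beta).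
  split; first by rewrite (sprod_unitr S_beta) (sprod_unitl_fixed cone_K K_u S_beta).
  split; first exact: (sprod_cle cone_K S_beta).
  exact: (sprodA cone_K K_u S_alpha S_beta).
exists (R^o * R^o)%type, (@orthant R), (1, 1), fst, (1, 0), (0, 1).
split; first exact: orthant_interval_effect_algebra.
split; first exact: state_fst.
do 2 (split; first by apply/in_eff_orthant; rewrite /= !lexx (@ler01 R)).
by rewrite /sprod /= scale0r scale1r; split=> // -[] /eqP; rewrite oner_eq0.
Qed.
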